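(* Let $\mathcal{P}$ be a finite poset, let $\mathcal{A},\mathcal{B}$ be families of downsets of $\mathcal{P}$, and let $p\in\mathcal{P}$. Define $\mathcal{A}^p_1=\{A\setminus{\downarrow}p: A\in\mathcal{A}\}$, $\mathcal{B}^p_1=\{B\setminus{\downarrow}p: B\in\mathcal{B},\ p\in B\}$, $\mathcal{A}^p_2=\{A: A\in\mathcal{A},\ p\notin A\}$, $\mathcal{B}^p_2=\{B\setminus{\uparrow}p: B\in\mathcal{B}\}$. Then $\mathcal{A}$ and $\mathcal{B}$ are dual over $\mathcal{L}(\mathcal{P})$ if and only if $\mathcal{A}^p_1$ and $\mathcal{B}^p_1$ are dual over $\mathcal{L}(\mathcal{P}\setminus{\downarrow}p)$ and $\mathcal{A}^p_2$ and $\mathcal{B}^p_2$ are dual over $\mathcal{L}(\mathcal{P}\setminus{\uparrow}p)$.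
   Context: For a finite poset $\mathcal{P}$, $\mathcal{L}(\mathcal{P})$ denotes the distributive lattice of all downsets (order ideals) of $\mathcal{P}$ ordered by inclusion; subsets $\mathcal{P}\setminus{\downarrow}p$ and $\mathcal{P}\setminus{\uparrow}p$ carry the induced order. ${\downarrow}p=\{q\in\mathcal{P}:q\le p\}$ and ${\uparrow}p=\{q\in\mathcal{P}:q\ge p\}$ (both contain $p$). Two families $\mathcal{A},\mathcal{B}$ of downsets of $\mathcal{P}$ are dual over $\mathcal{L}(\mathcal{P})$ if $A\not\subseteq B$ for all $A\in\mathcal{A},B\in\mathcal{B}$ (property ( * )), and for every downset $X$ of $\mathcal{P}$ either $X\subseteq B$ for some $B\in\mathcal{B}$ or $A\subseteq X$ for some $A\in\mathcal{A}$. *)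

From mathcomp Require Import all_boot all_order.
Set Implicit Arguments. Unset Strict Implicit. Unset Printing Implicit Defensive.
Import Order.TTheory.
Local Open Scope order_scope.

Definition downp {d} {T : finPOrderType d} (p : T) : {set T} := [set q | q <= p].
Definition upp {d} {T : finPOrderType d} (p : T) : {set T} := [set q | p <= q].

Definition downset_in {d} {T : finPOrderType d} (S X : {set T}) : Prop :=
  X \subset S /\ (forall x y : T, x \in X -> y \in S -> y <= x -> y \in X).

Definition dual_over {d} {T : finPOrderType d} (S : {set T})
  (FA FB : {set {set T}}) : Prop :=
  (forall A B, A \in FA -> B \in FB -> ~~ (A \subset B)) /\
  (forall X, downset_in S X ->
     (exists2 B, B \in FB & X \subset B) \/ (exists2 A, A \in FA & A \subset X)).

(* Split according to whether p lies in the test downset X.  Downsets of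
   P \ ↓p correspond to the downsets of P containing p via X ↦ X ∪ ↓p, and
   both removing ↓p from such a set and adding it back preserve inclusion
   with the members of B containing p.  Downsets of P \ ↑p are exactly the
   downsets of P avoiding p, and for them inclusion in B or in B \ ↑p is
   the same condition.  The two halves of duality (no inclusion A ⊆ B, and
   every downset is caught by B from above or by A from below) split
   independently along these two cases. *)
From mathcomp Require Import all_boot all_order.
Set Implicit Arguments. Unset Strict Implicit. Unset Printing Implicit Defensive.
Import Order.TTheory.
Local Open Scope order_scope.

Lemma setD_subset_setD (T : finType) (A B D : {set T}) :
  D \subset B -> (A :\: D \subset B :\: D) = (A \subset B).
Proof.
by move=> DB; rewrite subDset setDE setUIr setUCr setIT (setUidPr DB).
Qed.

Section Downsets.
Variables (d : Order.disp_t) (T : finPOrderType d) (p : T).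
Implicit Types X B : {set T}.

Lemma downp_subset B : downset_in [set: T] B -> p \in B -> downp p \subset B.
Proof. by case=> _ closB pB; apply/subsetP=> q; rewrite inE => /closB->. Qed.

Lemma downset_disjoint_upp B :
  downset_in [set: T] B -> p \notin B -> [disjoint B & upp p].
Proof.
case=> _ closB pB; rewrite disjoints_subset; apply/subsetP=> q qB.
by rewrite !inE; apply: contra pB => /(closB q p qB); apply.
Qed.

Lemma downset_setD_downp X :
  downset_in [set: T] X -> downset_in ([set: T] :\: downp p) (X :\: downp p).
Proof.
case=> _ closX; split; first exact: setSD (subsetT X).
move=> x y; rewrite !inE => /andP[_ xX] /andP[yp _] yx.
by rewrite yp (closX x y xX).
Qed.

Lemma downset_setU_downp X :
  downset_in ([set: T] :\: downp p) X -> downset_in [set: T] (X :|: downp p).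
Proof.
case=> _ closX; split; first exact: subsetT.
move=> x y; rewrite !inE => /orP[xX | xp] _ yx; last by rewrite (le_trans yx xp) orbT.
by case: (boolP (y <= p)) => yp; rewrite ?orbT // (closX x) // !inE yp.
Qed.

Lemma downset_in_setD_upp X :
  downset_in ([set: T] :\: upp p) X <-> downset_in [set: T] X /\ p \notin X.
Proof.
split=> [[XS closX] | [dX pX]].
  have notup q : q \in X -> ~~ (p <= q).
    by move=> /(subsetP XS); rewrite !inE andbT.
  split; last by apply/negP=> /notup; rewrite lexx.
  split=> [|x y xX _ yx]; first exact: subsetT.
  apply: (closX x) => //; rewrite !inE andbT.
  by apply: contra (notup x xX) => /le_trans; apply.
split; last by case: dX => _ closX x y xX _; apply: closX.
by rewrite setTD -disjoints_subset downset_disjoint_upp.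
Qed.

End Downsets.

Definition no_subset (T : finType) (FA FB : {set {set T}}) : Prop :=
  forall A B, A \in FA -> B \in FB -> ~~ (A \subset B).

Definition covering d (T : finPOrderType d) (S : {set T})
    (FA FB : {set {set T}}) : Prop :=
  forall X, downset_in S X ->
    (exists2 B, B \in FB & X \subset B) \/ (exists2 A, A \in FA & A \subset X).

Section Splitting.
Variables (d : Order.disp_t) (T : finPOrderType d) (FA FB : {set {set T}}) (p : T).
Hypothesis downA : forall A, A \in FA -> downset_in [set: T] A.
Hypothesis downB : forall B, B \in FB -> downset_in [set: T] B.

Lemma setD_downp_subsetE A B :
  B \in FB -> p \in B -> (A :\: downp p \subset B :\: downp p) = (A \subset B).
Proof. by move=> Bin pB; rewrite setD_subset_setD // (downp_subset (downB Bin)). Qed.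

Lemma subset_setD_uppE A B :
  A \in FA -> p \notin A -> (A \subset B :\: upp p) = (A \subset B).
Proof. by move=> Ain pA; rewrite subsetD (downset_disjoint_upp (downA Ain)) ?andbT. Qed.

Lemma no_subset_split :
  no_subset FA FB <->
  no_subset [set A :\: downp p | A in FA]
            [set B :\: downp p | B in [set B in FB | p \in B]] /\
  no_subset [set A in FA | p \notin A] [set B :\: upp p | B in FB].
Proof.
split=> [noAB | [noAB1 noAB2] A B Ain Bin].
  split=> A' B'.
    move=> /imsetP[A Ain ->] /imsetP[B]; rewrite inE => /andP[Bin pB] ->.
    by rewrite setD_downp_subsetE // noAB.
  rewrite inE => /andP[Ain pA] /imsetP[B Bin ->].
  by rewrite subset_setD_uppE // noAB.
apply/negP=> AB; case: (boolP (p \in B)) => pB.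
  have := noAB1 _ _ (imset_f _ Ain) (imset_f _ (_ : B \in [set B in FB | p \in B])).
  by rewrite inE Bin pB setD_downp_subsetE // AB => /(_ isT).
have pA : p \notin A by apply: contra pB; apply: (subsetP AB).
have := noAB2 A _ _ (imset_f _ Bin).
by rewrite inE Ain pA subset_setD_uppE // AB => /(_ isT).
Qed.

Lemma covering_downp :
  covering [set: T] FA FB ->
  covering ([set: T] :\: downp p)
    [set A :\: downp p | A in FA]
    [set B :\: downp p | B in [set B in FB | p \in B]].
Proof.
move=> cover X dX; have XD : [disjoint X & downp p].
  by case: dX => XS _; rewrite disjoints_subset -setTD.
case: (cover _ (downset_setU_downp dX)) => [[B Bin XB] | [A Ain AX]].
  have pB : p \in B by apply: (subsetP XB); rewrite !inE lexx orbT.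
  left; exists (B :\: downp p); first by apply: imset_f; rewrite inE Bin pB.
  by rewrite subsetD XD andbT (subset_trans _ XB) // subsetUl.
right; exists (A :\: downp p); first exact: imset_f.
by rewrite subDset setUC.
Qed.

Lemma covering_upp :
  covering [set: T] FA FB ->
  covering ([set: T] :\: upp p)
    [set A in FA | p \notin A] [set B :\: upp p | B in FB].
Proof.
move=> cover X /downset_in_setD_upp[dX pX].
case: (cover _ dX) => [[B Bin XB] | [A Ain AX]].
  left; exists (B :\: upp p); first exact: imset_f.
  by rewrite subsetD XB downset_disjoint_upp.
right; exists A => //; rewrite inE Ain.
by apply: contra pX; apply: (subsetP AX).
Qed.

Lemma covering_glue :
  covering ([set: T] :\: downp p)
    [set A :\: downp p | A in FA]
    [set B :\: downp p | B in [set B in FB | p \in B]] ->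
  covering ([set: T] :\: upp p)
    [set A in FA | p \notin A] [set B :\: upp p | B in FB] ->
  covering [set: T] FA FB.
Proof.
move=> cover1 cover2 X dX; case: (boolP (p \in X)) => pX.
  have pX' := downp_subset dX pX.
  case: (cover1 _ (downset_setD_downp p dX))
    => [[_ /imsetP[B + ->] XB] | [_ /imsetP[A Ain ->] AX]].
    rewrite inE => /andP[Bin pB]; left; exists B => //.
    by rewrite -setD_downp_subsetE.
  by right; exists A; rewrite // -(setD_subset_setD _ pX').
have dX' : downset_in ([set: T] :\: upp p) X by apply/downset_in_setD_upp.
case: (cover2 _ dX') => [[_ /imsetP[B Bin ->] XB] | [A + AX]].
  by left; exists B => //; apply: subset_trans XB (subsetDl _ _).
by rewrite inE => /andP[Ain _]; right; exists A.
Qed.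

End Splitting.

Theorem lemma3 (d : Order.disp_t) (T : finPOrderType d)
  (FA FB : {set {set T}}) (p : T)
  (hA : forall A, A \in FA -> downset_in [set: T] A)
  (hB : forall B, B \in FB -> downset_in [set: T] B) :
  dual_over [set: T] FA FB <->
  (dual_over ([set: T] :\: downp p)
      [set A :\: downp p | A in FA]
      [set B :\: downp p | B in [set B in FB | p \in B]]
   /\
   dual_over ([set: T] :\: upp p)
      [set A in FA | p \notin A]
      [set B :\: upp p | B in FB]).
Proof.
have noAB := no_subset_split p hA hB.
split=> [[/noAB[no1 no2] cover] | [[no1 cover1] [no2 cover2]]].
  by split; split; [| exact: covering_downp | | exact: covering_upp].
split; first exact/noAB.
exact: covering_glue cover1 cover2.
Qed.
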